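(* Let $A=\Bbbk Q/I$ be a finite-dimensional triangular monomial algebra, let $n\ge 0$, and let $x=\sum_{i=1}^k\alpha_i\,(p_i\|b_i)\in\Bbbk(\Gamma_n\|\mathcal B)$ be an irreducible cocycle (with $\alpha_i\in\Bbbk$ nonzero and the pairs $(p_i,b_i)$ pairwise distinct). Then there exist nontrivial paths $\tilde p$ and $\tilde b$ such that for every $1\le i\le k$ there are $a_i,c_i\in\mathcal B$ with $p_i=c_i\,\tilde p\,a_i$ and $b_i=c_i\,\tilde b\,a_i$.
   Context: Let $\Bbbk$ be a field, $Q=(Q_0,Q_1,s,t)$ a finite quiver, and $A=\Bbbk Q/I$ a finite-dimensional monomial algebra, i.e. $I$ is an ideal generated by paths of length at least $2$. $A$ is triangular if $Q$ has no oriented cycles. Let $E=\Bbbk Q_0$, $A^e=A\otimes_\Bbbk A^{\mathrm{op}}$. Paths are written from right to left ($p=\alpha_n\cdots\alpha_1$, $t(\alpha_i)=s(\alpha_{i+1})$); $qp$ is concatenation. $\mathcal B$ = set of paths not in $I$ (a basis of $A$). If $p=bqa$, $q$ is a divisor; $q\le p$ denotes an occurrence with $\mathrm{pre}_p(q)=a$, $\mathrm{suf}_p(q)=b$; suffix/prefix mean $b$/$a$ trivial; proper means $q\ne p$. For $n\ge -1$, a left $n$-ambiguity is a path $p=u_{-1}u_0\cdots u_n$ with $u_{-1}\in Q_0$, $u_0\in Q_1$, $u_i\in\mathcal B$, and for $0\le i\le n-1$, $u_iu_{i+1}\in I$ while no proper suffix of $u_iu_{i+1}$ lies in $I$; a right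 $n$-ambiguity is $p=v_n\cdots v_0v_{-1}$ with $v_{-1}\in Q_0$, $v_0\in Q_1$, $v_i\in\mathcal B$, $v_{i+1}v_i\in I$ and no proper prefix of $v_{i+1}v_i$ in $I$. These notions coincide; $\Gamma_n$ is the set of $n$-ambiguities; decompositions are unique; $\sigma_m(p):=u_0\cdots u_m$, $\pi_m(p):=v_m\cdots v_0$; $\mathrm{Sub}(p)=\{q\in\Gamma_{n-1}:q\le p\}$. Bardzell's resolution: $\mathbb B(A)_{n+1}=A\otimes_E\Bbbk\Gamma_n\otimes_EA$, with $d(1\otimes p\otimes1)=\sum_{q\in\mathrm{Sub}(p)}\mathrm{suf}_p(q)\otimes q\otimes\mathrm{pre}_p(q)$ for $p\in\Gamma_n$, $n$ odd, and $d(1\otimes p\otimes1)=\mathrm{suf}_p(\pi_{n-1}(p))\otimes\pi_{n-1}(p)\otimes1-1\otimes\sigma_{n-1}(p)\otimes\mathrm{pre}_p(\sigma_{n-1}(p))$ for $n$ even. Let $\Bbbk(\Gamma_n\|\mathcal B):=\mathrm{Hom}_{E^e}(\Bbbk\Gamma_n,A)\cong\mathrm{Hom}_{A^e}(\mathbb B(A)_{n+1},A)$; it has basis the maps $(p\|b)$ for $p\in\Gamma_n$, $b\in\mathcal B$ parallel to $p$ (same source and target), where $(p\|b)(q)=b$ if $q=p$ and $0$ for other $q\in\Gamma_n$. The differential $\partial^{n+1}:\Bbbk(\Gamma_{n}\|\mathcal B)\to\Bbbk(\Gamma_{n+1}\|\mathcal B)$ is $(\partial f)(q)=\hat f(d(1\otimes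 q\otimes 1))$, where $\hat f(c\otimes p\otimes a)=c\,f(p)\,a$ (product in $A$). A cocycle is $x$ with $\partial x=0$. A cocycle $x=\sum_{i=1}^k\alpha_i(p_i\|b_i)$ with all $\alpha_i\ne0$ and the $(p_i\|b_i)$ pairwise distinct is irreducible if for every proper nonempty subsequence $1\le i_1<\dots<i_\ell\le k$ ($\ell<k$) and all nonzero $\beta_1,\dots,\beta_\ell\in\Bbbk$, $\partial\big(\sum_{j=1}^\ell\beta_j(p_{i_j}\|b_{i_j})\big)\neq 0$. *)

From HB Require Import structures.
From mathcomp Require Import all_boot all_algebra.
Import GRing.Theory.
Set Implicit Arguments. Unset Strict Implicit. Unset Printing Implicit Defensive.

Record quiver := Quiver {
  Q0 : finType;
  Q1 : finType;
  qs : Q1 -> Q0;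
  qt : Q1 -> Q0 }.

Section BardzellCochains.
Variable Q : quiver.

(* A path is a pair (v, w) where w is the WRITTEN word of arrows,
   p = alpha_n ... alpha_1 stored as [:: alpha_n; ...; alpha_1]
   (right-to-left convention), and v is its source vertex
   (for a trivial path e_v, w = [::]). *)
Definition qpath : Type := (Q0 Q * seq (Q1 Q))%type.

Definition pword (p : qpath) : seq (Q1 Q) := p.2.
Definition psrc (p : qpath) : Q0 Q := p.1.
Definition ptgt (p : qpath) : Q0 Q := if p.2 is x :: _ then qt x else p.1.

(* consecutive written letters x y (i.e. ... x y ...) satisfy t(y) = s(x) *)
Definition adj (x y : Q1 Q) : bool := qs x == qt y.

Definition valid_path (p : qpath) : bool :=
  sorted adj p.2 && (if p.2 is x :: w then p.1 == qs (last x w) else true).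

Definition nontrivial (p : qpath) : bool := p.2 != [::].

(* concatenation q p (first p, then q), meaningful when ptgt p = psrc q *)
Definition qcomp (q p : qpath) : qpath := (p.1, q.2 ++ p.2).

(* the vertex at position i (0 = leftmost = target, size = source) *)
Definition vertex_at (p : qpath) (i : nat) : Q0 Q :=
  if i is i'.+1 then (if drop i' p.2 is x :: _ then qs x else p.1) else ptgt p.

Definition subpath (p : qpath) (i j : nat) : qpath :=
  (vertex_at p j, drop i (take j p.2)).

(* The monomial ideal I generated by the set of paths R: a path lies in I
   iff one of the generators is a divisor of it. *)
Variable R : seq (seq (Q1 Q)).

Definition inI (p : qpath) : bool := has (fun r => infix r p.2) R.

Definition inB (p : qpath) : bool := valid_path p && ~~ inI p.

Definition monomial_rels : Prop :=
  forall r, r \in R -> sorted adj r /\ (2 <= size r)%N.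

Definition triangular : Prop :=
  forall p, valid_path p -> nontrivial p -> psrc p != ptgt p.

Definition fin_dim : Prop :=
  exists N, forall p, valid_path p -> (N <= size p.2)%N -> inI p.

(* left n-ambiguity: p = u_{-1} u_0 ... u_n, us = [:: u_0; ...; u_n]
   (u_{-1} = ptgt p is implicit).  A proper suffix (divisor with trivial
   left cofactor) of w is subpath w 0 k with k < |w|. *)
Definition left_amb (n : nat) (p : qpath) (us : seq qpath) : Prop :=
  valid_path p /\ size us = n.+1 /\
      flatten (map pword us) = p.2 /\
      size (nth p us 0).2 = 1%N /\
      (forall i, (i <= n)%N -> inB (nth p us i)) /\
      (forall i, (i < n)%N ->
         ptgt (nth p us i.+1) = psrc (nth p us i) /\
         let w := qcomp (nth p us i) (nth p us i.+1) in
         inI w /\ forall k, (k < size w.2)%N -> ~~ inI (subpath w 0 k)).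

(* right n-ambiguity: p = v_n ... v_0 v_{-1}, vs = [:: v_n; ...; v_0]
   (v_{-1} = psrc p implicit).  A proper prefix (divisor with trivial
   right cofactor) of w is subpath w k |w| with 0 < k. *)
Definition right_amb (n : nat) (p : qpath) (vs : seq qpath) : Prop :=
  valid_path p /\ size vs = n.+1 /\
      flatten (map pword vs) = p.2 /\
      size (nth p vs n).2 = 1%N /\
      (forall i, (i <= n)%N -> inB (nth p vs i)) /\
      (forall i, (i < n)%N ->
         ptgt (nth p vs i.+1) = psrc (nth p vs i) /\
         let w := qcomp (nth p vs i) (nth p vs i.+1) in
         inI w /\ forall k, (0 < k)%N -> ~~ inI (subpath w k (size w.2))).

Definition Gamma (n : nat) (p : qpath) : Prop := exists us, left_amb n p us.

(* lengths of sigma_m(p) = u_0 ... u_m and pi_m(p) = v_m ... v_0 *)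
Definition lsig (m : nat) (us : seq qpath) : nat :=
  size (flatten (map pword (take m.+1 us))).
Definition lpi (m : nat) (vs : seq qpath) : nat :=
  size (flatten (map pword (drop (size vs - m.+1) vs))).

Variable K : fieldType.
Local Open Scope ring_scope.

(* Elements of A are represented by their coefficient functions on paths;
   the image in A of a path w is w if w is not in I, and 0 otherwise. *)
Definition pathelt (w : qpath) : qpath -> K :=
  fun z => if ~~ inI w && (z == w) then 1 else 0.

(* A cochain x = sum_i alpha_i (p_i || b_i) is given by the list of the
   triples (alpha_i, (p_i, b_i)). *)
Definition cochain := seq (K * (qpath * qpath)).

(* hat f (c (x) r (x) a) = c f(r) a *)
Definition hatf (x : cochain) (c r a : qpath) : qpath -> K :=
  fun z => \sum_(e <- x | e.2.1 == r) e.1 * pathelt (qcomp (qcomp c e.2.2) a) z.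

(* (partial x)(q) for q in Gamma_m, m odd: sum over the occurrences of
   divisors of q (only occurrences of some p_i contribute). *)
Definition Dodd (x : cochain) (q : qpath) : qpath -> K :=
  fun z => let L := size q.2 in
  \sum_(i < L.+1) \sum_(j < L.+1 | (i <= j)%N)
     hatf x (subpath q 0 i) (subpath q i j) (subpath q j L) z.

(* (partial x)(q) for q in Gamma_m, m even, given |sigma_{m-1}(q)| = ls and
   |pi_{m-1}(q)| = lp *)
Definition Deven (x : cochain) (q : qpath) (ls lp : nat) : qpath -> K :=
  fun z => let L := size q.2 in
  hatf x (subpath q 0 (L - lp)) (subpath q (L - lp) L) (subpath q L L) z
  - hatf x (subpath q 0 0) (subpath q 0 ls) (subpath q ls L) z.

Definition cocycle (n : nat) (x : cochain) : Prop :=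
  forall q, Gamma n.+1 q ->
    if odd n.+1 then forall z, Dodd x q z = 0
    else forall us vs, left_amb n.+1 q us -> right_amb n.+1 q vs ->
      forall z, Deven x q (lsig n us) (lpi n vs) z = 0.

Definition wf_cochain (n : nat) (x : cochain) : Prop :=
  uniq (map snd x) /\
  forall e, e \in x ->
    [/\ e.1 != 0, Gamma n e.2.1, inB e.2.2,
        psrc e.2.2 = psrc e.2.1 & ptgt e.2.2 = ptgt e.2.1].

Definition irreducible (n : nat) (x : cochain) : Prop :=
  cocycle n x /\
  forall (m : bitseq), size m = size x ->
    (0 < count id m < size x)%N ->
    forall bs : seq K, size bs = count id m -> all (fun b => b != 0) bs ->
      ~ cocycle n (zip bs (map snd (mask m x))).

End BardzellCochains.

From HB Require Import structures.
From mathcomp Require Import all_boot all_algebra.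
From mathcomp Require Import boolp.
Set Implicit Arguments. Unset Strict Implicit. Unset Printing Implicit Defensive.
Import GRing.Theory.

(* Call two terms of [x] linked when they contribute to the same coefficient
   [z] of the differential at the same (n+1)-ambiguity [q].  Such a
   contribution of [(p || b)] means that [q = c p a] and [z = c b a] are
   distinct parallel paths.  Irreducibility makes the linking relation
   connected on [x], since a nonempty proper subfamily closed under linking
   would be a cocycle on its own.  In a triangular quiver, two difference
   windows of the same pair of distinct parallel paths always share a
   nonempty sub-window.  Hence, if a pair [(P, H)] divides some terms of [x]
   with common cofactors and one of them is linked to a term outside, [(P, H)]
   can be shrunk to a pair dividing strictly more terms; a pair dividing as
   many terms as possible therefore divides all of them. *)

Lemma catsI (T : Type) : right_injective (@cat T).
Proof. by move=> s s1 s2; elim: s => //= x s IH [] /IH. Qed.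

Lemma catIs (T : Type) : left_injective (@cat T).
Proof.
move=> s s1 s2 /(congr1 rev); rewrite !rev_cat => /catsI /(congr1 rev).
by rewrite !revK.
Qed.

Lemma cat_eq_cat_cases (T : Type) (l1 r1 l2 r2 : seq T) : l1 ++ r1 = l2 ++ r2 ->
  (exists t, l2 = l1 ++ t /\ r1 = t ++ r2) \/
  (exists t, l1 = l2 ++ t /\ r2 = t ++ r1).
Proof.
elim: l1 l2 => [|x l1 IH] [|y l2] /=.
- by move=> ->; left; exists [::].
- by move=> ->; left; exists (y :: l2).
- by move=> <-; right; exists (x :: l1).
- by case=> <- /IH [[t [-> ->]]|[t [-> ->]]]; [left|right]; exists t.
Qed.

Section Words.
Variable Q : quiver.
Implicit Types (p q P B : qpath Q) (w l m r : seq (Q1 Q)) (d : Q0 Q).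

Definition word_src w d : Q0 Q := if w is y :: w' then qs (last y w') else d.
Definition word_tgt w d : Q0 Q := if w is y :: _ then qt y else d.

Definition word_path w d : qpath Q := (word_src w d, w).

Lemma ptgtE p : ptgt p = word_tgt p.2 p.1.
Proof. by case: p => [v []]. Qed.

Lemma valid_pathE p : valid_path p = sorted (@adj Q) p.2 && (p.1 == word_src p.2 p.1).
Proof. by case: p => [v [|y w]] //=; rewrite eqxx. Qed.

Lemma valid_word_path w d : sorted (@adj Q) w -> valid_path (word_path w d).
Proof. by case: w => [|y w] Sw; rewrite valid_pathE Sw /= eqxx. Qed.

Lemma word_src_cat l m d d' : m != [::] -> word_src (l ++ m) d = word_src m d'.
Proof. by case: m => // y m _; case: l => //= z l; rewrite last_cat. Qed.

Lemma word_tgt_cat m r d d' : m != [::] -> word_tgt (m ++ r) d = word_tgt m d'.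
Proof. by case: m. Qed.

Lemma vertex_at_prefix p l r : p.2 = l ++ r ->
  vertex_at p (size l) = word_src l (ptgt p).
Proof.
case: l => [|y l] E //.
by rewrite /vertex_at /= E lastI cat_rcons -(size_belast y l) drop_size_cat.
Qed.

Lemma vertex_at_suffix p l r : valid_path p -> p.2 = l ++ r ->
  vertex_at p (size l) = word_tgt r p.1.
Proof.
move=> /andP[S V] E; rewrite (vertex_at_prefix E).
case: l E => [|y l] E /=; first by rewrite /ptgt E.
case: r E => [|z r] E /=; first by move: V; rewrite E cats0 => /eqP ->.
by move: S; rewrite E /= cat_path /= => /and3P[_ /eqP].
Qed.

Lemma valid_path_sorted_infix p w : valid_path p -> infix w p.2 -> sorted (@adj Q) w.
Proof. by case/andP=> Sp _ wp; apply: infix_sorted Sp. Qed.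

Definition parallel P B :=
  [/\ valid_path P, valid_path B, P.1 = B.1 & ptgt P = ptgt B].

Lemma parallel_sym P B : parallel P B -> parallel B P.
Proof. by case=> *; split. Qed.

Lemma vertex_at_common_prefix P B c X Y : parallel P B ->
  P.2 = c ++ X -> B.2 = c ++ Y -> vertex_at P (size c) = vertex_at B (size c).
Proof.
by case=> _ _ _ Et EP EB; rewrite (vertex_at_prefix EP) (vertex_at_prefix EB) Et.
Qed.

Lemma vertex_at_common_suffix P B a X Y : parallel P B ->
  P.2 = X ++ a -> B.2 = Y ++ a -> vertex_at P (size X) = vertex_at B (size Y).
Proof.
move=> [VP VB E1 _] EP EB.
by rewrite (vertex_at_suffix VP EP) (vertex_at_suffix VB EB) E1.
Qed.

Definition pair_divides (M H p b : seq (Q1 Q)) : Prop :=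
  exists c a, p = c ++ M ++ a /\ b = c ++ H ++ a.

Lemma pair_divides_refl (p b : seq (Q1 Q)) : pair_divides p b p b.
Proof. by exists [::], [::]; rewrite !cats0. Qed.

Lemma pair_divides_trans (M H M1 H1 p b : seq (Q1 Q)) :
  pair_divides M H M1 H1 -> pair_divides M1 H1 p b -> pair_divides M H p b.
Proof.
move=> [x [y [-> ->]]] [c [a [-> ->]]].
by exists (c ++ x), (y ++ a); rewrite -!catA.
Qed.

Lemma sorted_cat3 l m r d : m != [::] ->
  sorted (@adj Q) (l ++ m ++ r) =
  [&& sorted (@adj Q) l, sorted (@adj Q) m, sorted (@adj Q) r,
      word_src l (word_tgt m d) == word_tgt m d &
      word_tgt r (word_src m d) == word_src m d].
Proof.
case: m => // y m _.
have Hr : path (@adj Q) (last y m) r =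
    sorted (@adj Q) r && (word_tgt r (qs (last y m)) == qs (last y m)).
  by case: r => [|z r] /=; rewrite ?eqxx // andbC /adj eq_sym.
case: l => [|x l] /=; first by rewrite cat_path Hr eqxx.
rewrite cat_path /= cat_path Hr /adj; congr (_ && _).
by rewrite andbCA; congr (_ && _); rewrite andbCA.
Qed.

Lemma word_src_replace l m m' r d : m != [::] -> m' != [::] ->
  word_src m d = word_src m' d -> word_src (l ++ m ++ r) d = word_src (l ++ m' ++ r) d.
Proof.
move=> nm nm' E; case: r => [|z r]; first by rewrite !cats0 !(word_src_cat _ _ d).
by rewrite !catA !(word_src_cat _ _ d).
Qed.

Lemma word_tgt_replace l m m' r d : m != [::] -> m' != [::] ->
  word_tgt m d = word_tgt m' d -> word_tgt (l ++ m ++ r) d = word_tgt (l ++ m' ++ r) d.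
Proof.
move=> nm nm' E; case: l => [|y l] //=.
by rewrite !(word_tgt_cat _ _ d).
Qed.

Lemma vertex_at_size p : valid_path p -> vertex_at p (size p.2) = p.1.
Proof.
by move=> Vp; rewrite (vertex_at_suffix (r := [::]) Vp) ?cats0.
Qed.

Lemma parallel_replace q l r p b : valid_path q -> q.2 = l ++ p.2 ++ r ->
  parallel p b -> p.2 != [::] -> b.2 != [::] -> parallel q (q.1, l ++ b.2 ++ r).
Proof.
move=> Vq Eq [Vp Vb E1 Et] np nb; have Sb := valid_path_sorted_infix Vb (infix_refl _).
have Es : word_src b.2 q.1 = word_src p.2 q.1.
  move: Vp Vb; rewrite !valid_pathE E1 => /andP[_ /eqP Ep] /andP[_ /eqP Eb].
  by move: Ep Eb; case: (p.2) np => // ? ? _; case: (b.2) nb => //= ? ? _ <- <-.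
have Et' : word_tgt b.2 q.1 = word_tgt p.2 q.1.
  by move: Et; rewrite !ptgtE; case: (p.2) np; case: (b.2) nb.
move: (Vq); rewrite valid_pathE Eq (sorted_cat3 _ _ q.1 np).
move=> /andP[/and5P[Sl Sp Sr Jl Jr] Eq1].
split => //=.
- rewrite valid_pathE (sorted_cat3 _ _ q.1 nb) /= Sl Sb Sr Es Et' Jl Jr /=.
  by rewrite (word_src_replace _ _ nb np Es).
- by rewrite !ptgtE Eq /= (word_tgt_replace _ _ nb np Et').
Qed.

Lemma valid_suffix_path p l r : valid_path p -> p.2 = l ++ r -> valid_path (p.1, r).
Proof.
rewrite !valid_pathE => /andP[Sp /eqP Ep] E; rewrite /=.
rewrite (infix_sorted _ Sp) ?E ?suffix_infix //=.
case: r E => [|y r] E //; by rewrite {1}Ep E (word_src_cat _ _ p.1).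
Qed.

Lemma valid_prefix_path p l r : valid_path p -> p.2 = l ++ r ->
  valid_path (vertex_at p (size l), l).
Proof.
move=> Vp E; rewrite (vertex_at_prefix E).
by apply/valid_word_path/(valid_path_sorted_infix Vp); rewrite E prefix_infix.
Qed.

Lemma factor_paths p l m r d : valid_path p -> p.2 = l ++ m ++ r -> m != [::] ->
  [/\ valid_path (p.1, r), valid_path (vertex_at p (size l), l),
      ptgt (p.1, r) = psrc (word_path m d)
    & ptgt (word_path m d) = vertex_at p (size l)].
Proof.
move=> Vp E nm; have E' : p.2 = (l ++ m) ++ r by rewrite E catA.
split; [exact: valid_suffix_path E' | exact: valid_prefix_path E | |].
- rewrite ptgtE /= -(vertex_at_suffix Vp E') (vertex_at_prefix E').
  exact: word_src_cat.
- by rewrite ptgtE /= (vertex_at_suffix Vp E); case: (m) nm.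
Qed.

Hypothesis tri : triangular Q.

Lemma parallel_nontrivial p (b : qpath Q) :
  parallel p b -> nontrivial p -> nontrivial b.
Proof.
move=> [Vp _ E1 Et] np; apply: contra_neq (tri Vp np) => b0.
by rewrite /psrc E1 Et ptgtE b0.
Qed.

Lemma vertex_at_neq p l m r : valid_path p -> p.2 = l ++ m ++ r -> m != [::] ->
  vertex_at p (size l) != vertex_at p (size (l ++ m)).
Proof.
move=> Vp E; case: m E => // y m E _.
have S : sorted (@adj Q) (y :: m).
  by apply: (valid_path_sorted_infix Vp); rewrite E infix_infix.
have := tri (valid_word_path (qt y) S); rewrite /nontrivial /= eq_sym => /(_ isT).
rewrite (vertex_at_suffix Vp E) (vertex_at_prefix (l := l ++ y :: m) (r := r));
  last by rewrite E catA.
by rewrite (@word_src_cat l (y :: m) _ (qt y)).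
Qed.

(* An empty [H] would make the two ends of [M] the same vertex, a cycle. *)
Lemma parallel_factor_neq_nil P B c M H a : parallel P B ->
  P.2 = c ++ M ++ a -> B.2 = c ++ H ++ a -> M != [::] -> H != [::].
Proof.
move=> PB EP EB nM; have [VP _ _ _] := PB.
apply: contra_neq (vertex_at_neq VP EP nM) => H0.
rewrite (vertex_at_common_prefix PB EP EB).
rewrite (vertex_at_common_suffix (a := a) (X := c ++ M) (Y := c) PB) -?catA //.
by rewrite EB H0.
Qed.

Lemma parallel_no_crossing P B c1 M1 H1 s M2 H2 a2 : parallel P B -> P.2 != B.2 ->
  P.2 = c1 ++ M1 ++ s ++ M2 ++ a2 ->
  B.2 = c1 ++ H1 ++ s ++ M2 ++ a2 ->
  B.2 = c1 ++ M1 ++ s ++ H2 ++ a2 -> False.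
Proof.
move=> PB neqPB EP EB1 EB2; have [VP VB _ _] := PB.
have E : H1 ++ (s ++ M2 ++ a2) = M1 ++ (s ++ H2 ++ a2).
  by apply: (@catsI _ c1); rewrite -EB1 -EB2.
suff EM : M1 = H1.
  subst M1; move: E => /catsI /catsI /catIs EM; subst H2.
  by move: neqPB; rewrite EP EB1 eqxx.
have EPs : P.2 = (c1 ++ M1) ++ (s ++ M2 ++ a2) by rewrite EP -!catA.
have EBs : B.2 = (c1 ++ H1) ++ (s ++ M2 ++ a2) by rewrite EB1 -!catA.
have EBs' : B.2 = (c1 ++ M1) ++ (s ++ H2 ++ a2) by rewrite EB2 -!catA.
have Vsuf := vertex_at_common_suffix PB EPs EBs.
case: (cat_eq_cat_cases E) => [[t [EM _]]|[t [EH _]]].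
- suff /eqP t0 : t == [::] by rewrite EM t0 cats0.
  apply: contraT => nt.
  have EP' : P.2 = (c1 ++ H1) ++ t ++ (s ++ M2 ++ a2) by rewrite EP EM !catA.
  have := vertex_at_neq VP EP' nt.
  by rewrite (vertex_at_common_prefix PB EP' EBs) -catA -EM Vsuf eqxx.
- suff /eqP t0 : t == [::] by rewrite EH t0 cats0.
  apply: contraT => nt.
  have EB' : B.2 = (c1 ++ M1) ++ t ++ (s ++ M2 ++ a2) by rewrite EB1 EH !catA.
  have := vertex_at_neq VB EB' nt.
  by rewrite -(vertex_at_common_prefix PB EPs EBs') -catA -EH Vsuf eqxx.
Qed.

Lemma pair_divides_meet_shifted P B c1 M1 H1 a1 l M2 H2 a2 :
  parallel P B -> P.2 != B.2 ->
  P.2 = c1 ++ M1 ++ a1 -> B.2 = c1 ++ H1 ++ a1 ->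
  P.2 = (c1 ++ l) ++ M2 ++ a2 -> B.2 = (c1 ++ l) ++ H2 ++ a2 -> M2 != [::] ->
  exists M H, [/\ M != [::], pair_divides M H M1 H1 & pair_divides M H M2 H2].
Proof.
move=> PB neqPB EP1 EB1 EP2 EB2 nM2.
have EM : M1 ++ a1 = (l ++ M2) ++ a2.
  by apply: (@catsI _ c1); rewrite -EP1 EP2 -!catA.
have EH : H1 ++ a1 = l ++ H2 ++ a2.
  by apply: (@catsI _ c1); rewrite -EB1 EB2 -!catA.
case: (cat_eq_cat_cases EM) => [[t [Et Ea]]|[t [Et Ea]]]; last first.
  exists M2, H2; split => //; last exact: pair_divides_refl.
  exists l, t; split; first by rewrite Et -catA.
  by apply: (@catIs _ a1); rewrite EH Ea -!catA.
case: (cat_eq_cat_cases Et) => [[u [Ed Eu]]|[u [Ed Eu]]]; last first.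
  exfalso; apply: (parallel_no_crossing PB neqPB (c1 := c1) (M1 := M1) (H1 := H1)
    (s := u) (M2 := M2) (H2 := H2) (a2 := a2)).
  - by rewrite EP1 Ea Eu -!catA.
  - by rewrite EB1 Ea Eu -!catA.
  - by rewrite EB2 Ed -!catA.
have EH' : H1 ++ t = l ++ H2.
  by apply: (@catIs _ a2); rewrite -!catA -Ea EH.
case: (cat_eq_cat_cases EH') => [[v [Ed' Ev]]|[h [Eh _]]].
  exfalso; apply: (parallel_no_crossing (parallel_sym PB) _ (c1 := c1) (M1 := H1)
    (H1 := M1) (s := v) (M2 := H2) (H2 := M2) (a2 := a2)).
  - by rewrite eq_sym.
  - by rewrite EB1 Ea Ev -!catA.
  - by rewrite EP1 Ea Ev -!catA.
  - by rewrite EP2 Ed' -!catA.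
have EPu : P.2 = (c1 ++ l) ++ u ++ (t ++ a2) by rewrite EP1 Ea Ed -!catA.
have EBh : B.2 = (c1 ++ l) ++ h ++ (t ++ a2) by rewrite EB1 Ea Eh -!catA.
have [nu|/negPn/eqP u0] := boolP (u != [::]).
  exists u, h; split => //.
  - by exists l, [::]; rewrite Ed Eh !cats0.
  - exists [::], t; split => //.
    by apply: (@catsI _ l); rewrite -EH' Eh -catA.
have [nh|/negPn/eqP h0] := boolP (h != [::]).
  by have := parallel_factor_neq_nil (parallel_sym PB) EBh EPu nh; rewrite u0.
by move: neqPB; rewrite EPu EBh u0 h0 eqxx.
Qed.

(* By [parallel_no_crossing] the two windows overlap, and the overlap is
   again a window. *)
Lemma pair_divides_meet P B M1 H1 M2 H2 : parallel P B -> P.2 != B.2 ->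
  pair_divides M1 H1 P.2 B.2 -> pair_divides M2 H2 P.2 B.2 ->
  M1 != [::] -> M2 != [::] ->
  exists M H, [/\ M != [::], pair_divides M H M1 H1 & pair_divides M H M2 H2].
Proof.
move=> PB neqPB [c1 [a1 [EP1 EB1]]] [c2 [a2 [EP2 EB2]]] nM1 nM2.
have E : c1 ++ (M1 ++ a1) = c2 ++ (M2 ++ a2) by rewrite -EP1 -EP2.
case: (cat_eq_cat_cases E) => [[t [Ec _]]|[t [Ec _]]]; subst.
  exact: (pair_divides_meet_shifted PB neqPB EP1 EB1 EP2 EB2 nM2).
have [M [H [nM D2 D1]]] := pair_divides_meet_shifted PB neqPB EP2 EB2 EP1 EB1 nM1.
by exists M, H.
Qed.

End Words.

Section CocycleCoordinates.
Variables (Q : quiver) (R : seq (seq (Q1 Q))) (K : fieldType).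
Local Open Scope ring_scope.
Implicit Types (q z : qpath Q) (pb : qpath Q * qpath Q).

Lemma inI_infix (w p : qpath Q) : infix w.2 p.2 -> inI R w -> inI R p.
Proof.
by move=> wp /hasP[r rR rw]; apply/hasP; exists r => //; apply: infix_trans wp.
Qed.

Lemma Gamma_neq_nil n p : Gamma R n p -> p.2 != [::].
Proof.
case=> us [_ [Hs [Hf [H0 _]]]].
by case: us Hs Hf H0 => // u us _ <- /=; rewrite /pword; case: u.2.
Qed.

Lemma left_amb_inI n q us : left_amb R n.+1 q us -> inI R q.
Proof.
case=> _ [Hs [Hf [_ [_ Hi]]]]; have [_ [Hw _]] := Hi 0%N (ltn0Sn n).
apply: inI_infix Hw; case: us Hs Hf {Hi} => [|u0 [|u1 us]] //= _ <-.
by rewrite /pword catA prefix_infix.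
Qed.

Lemma lsig_le m k q us : left_amb R m q us -> (lsig k us <= size q.2)%N.
Proof.
case=> _ [_ [Hf _]]; rewrite /lsig -Hf.
rewrite -{2}(cat_take_drop k.+1 us) map_cat flatten_cat size_cat.
exact: leq_addr.
Qed.

(* The coefficient of [z] in [(partial (p || b)) q], in odd and even degree. *)
Definition dcoef_odd pb q z : K :=
  let L := size q.2 in
  \sum_(i < L.+1) \sum_(j < L.+1 | (i <= j)%N)
    (if pb.1 == subpath q i j then
       pathelt R K (qcomp (qcomp (subpath q 0 i) pb.2) (subpath q j L)) z else 0).

Definition dcoef_even pb q (ls lp : nat) z : K :=
  let L := size q.2 in
  (if pb.1 == subpath q (L - lp) L then
     pathelt R K (qcomp (qcomp (subpath q 0 (L - lp)) pb.2) (subpath q L L)) z else 0)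
  - (if pb.1 == subpath q 0 ls then
     pathelt R K (qcomp (qcomp (subpath q 0 0) pb.2) (subpath q ls L)) z else 0).

Lemma Dodd_sum (x : cochain Q K) q z :
  Dodd R x q z = \sum_(e <- x) e.1 * dcoef_odd e.2 q z.
Proof.
rewrite /Dodd /dcoef_odd /hatf.
under [RHS]eq_bigr => e _ do rewrite mulr_sumr.
rewrite exchange_big /=; apply: eq_bigr => i _.
under [RHS]eq_bigr => e _ do rewrite mulr_sumr.
rewrite exchange_big /=; apply: eq_bigr => j _.
rewrite big_mkcond /=; apply: eq_bigr => e _.
by case: ifP; rewrite ?mulr0.
Qed.

Lemma Deven_sum (x : cochain Q K) q ls lp z :
  Deven R x q ls lp z = \sum_(e <- x) e.1 * dcoef_even e.2 q ls lp z.
Proof.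
rewrite /Deven /dcoef_even /hatf.
under [RHS]eq_bigr => e _ do rewrite mulrBr.
rewrite sumrB; congr (_ - _); rewrite big_mkcond /=; apply: eq_bigr => e _;
by case: ifP; rewrite ?mulr0.
Qed.

(* A coordinate of the differential of an n-cochain: an (n+1)-ambiguity [dq]
   with (in even degree) its left and right decompositions, and a path [dz]. *)
Record dcoord :=
  DCoord { dq : qpath Q; dus : seq (qpath Q); dvs : seq (qpath Q); dz : qpath Q }.

Definition dcoord_ok n (c : dcoord) : Prop :=
  Gamma R n.+1 (dq c) /\
  (~~ odd n.+1 -> left_amb R n.+1 (dq c) (dus c) /\ right_amb R n.+1 (dq c) (dvs c)).

Definition dcoef n pb (c : dcoord) : K :=
  if odd n.+1 then dcoef_odd pb (dq c) (dz c)
  else dcoef_even pb (dq c) (lsig n (dus c)) (lpi n (dvs c)) (dz c).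

Lemma cocycleE n (y : cochain Q K) :
  cocycle R n y <-> forall c, dcoord_ok n c -> \sum_(e <- y) e.1 * dcoef n e.2 c = 0.
Proof.
split.
- move=> Hy [q us vs z] [Gq Hev]; have := Hy q Gq; rewrite /dcoef.
  case: (odd n.+1) Hev => Hev /=; first by move=> /(_ z); rewrite Dodd_sum.
  by have [L Rr] := Hev isT; move=> /(_ us vs L Rr z); rewrite Deven_sum.
- move=> Hy q Gq.
  have := Hy (DCoord q _ _ _); rewrite /dcoord_ok /dcoef /=.
  case: (odd n) => /= Hq.
  + by move=> us vs L Rr z; rewrite Deven_sum; apply: Hq.
  + by move=> z; rewrite Dodd_sum; apply: (Hq [::] [::]).
Qed.

Definition linked n pb pb' : Prop :=
  exists c, [/\ dcoord_ok n c, dcoef n pb c != 0 & dcoef n pb' c != 0].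

Lemma cocycle_filter n (y : cochain Q K) (P : pred (K * (qpath Q * qpath Q))) :
  cocycle R n y -> {in y &, forall e f, linked n e.2 f.2 -> P e -> P f} ->
  cocycle R n (filter P y).
Proof.
move=> /cocycleE Hy Hcl; apply/cocycleE => c oc; rewrite big_filter.
have [/hasP [e ey /andP [Pe ke]]|/hasPn H0] :=
  boolP (has (fun e => P e && (dcoef n e.2 c != 0)) y).
- rewrite -[RHS](Hy c oc) big_mkcond /=; apply: eq_big_seq => f fy.
  case: ifP => // Pf; apply/esym.
  have [kf|/negPn/eqP ->] := boolP (dcoef n f.2 c != 0); last by rewrite mulr0.
  by rewrite (Hcl e f ey fy (ex_intro _ c (And3 oc ke kf)) Pe) in Pf.
- rewrite big1_seq // => f /andP [Pf fy].
  by have := H0 f fy; rewrite Pf /= => /negPn/eqP ->; rewrite mulr0.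
Qed.

(* A proper nonempty subfamily closed under linking would be a cocycle. *)
Lemma irreducible_linked_out n (x : cochain Q K) (P : pred (K * (qpath Q * qpath Q))) :
  wf_cochain R n x -> irreducible R n x -> has P x -> ~~ all P x ->
  exists e f, [/\ e \in x, f \in x, P e, ~~ P f & linked n e.2 f.2].
Proof.
move=> [_ Hwf] [Hc Hirr] hasPx notall; apply: contrapT => Hcl.
have {}Hcl : {in x &, forall e f, linked n e.2 f.2 -> P e -> P f}.
  move=> e f ex fx lef Pe; apply: contrapT => /negP nPf.
  by apply: Hcl; exists e, f.
have cm : count id [seq P e | e <- x] = count P x by rewrite count_map.
apply: (Hirr [seq P e | e <- x] (size_map _ _) _ (map fst (filter P x))).
- have c0 : (0 < count P x)%N by rewrite -has_count.
  by rewrite cm c0 ltn_neqAle count_size andbT -all_count.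
- by rewrite size_map size_filter cm.
- apply/allP => b /mapP [e]; rewrite mem_filter => /andP [_ ex] ->.
  by have [] := Hwf e ex.
by rewrite -filter_mask zip_unzip; apply: cocycle_filter.
Qed.

End CocycleCoordinates.

Section NonzeroCoefficients.
Variables (Q : quiver) (R : seq (seq (Q1 Q))) (K : fieldType).
Local Open Scope ring_scope.

Lemma sumr_neq0_witness (I : eqType) (r : seq I) (P : pred I) (F : I -> K) :
  \sum_(i <- r | P i) F i != 0 -> exists i, [/\ i \in r, P i & F i != 0].
Proof.
move=> nz; have [/hasP [i ir /andP [Pi Fi]]|/hasPn F0] :=
  boolP (has (fun i => P i && (F i != 0)) r); first by exists i.
move: nz; rewrite big_seq_cond big1 ?eqxx // => i /andP [ir Pi].
by have := F0 i ir; rewrite Pi /= => /negPn/eqP.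
Qed.

Lemma pathelt_term_neq0 (b : bool) (w z : qpath Q) :
  (if b then pathelt R K w z else 0) != 0 -> [/\ b, z = w & ~~ inI R w].
Proof.
case: b; last by rewrite eqxx.
by rewrite /pathelt; case: ifP => [/andP [nI /eqP ->]|]; rewrite ?eqxx.
Qed.

Lemma dcoef_neq0 n pb c : dcoord_ok R n c -> dcoef R K n pb c != 0 ->
  exists i j, [/\ (i <= j <= size (dq c).2)%N, pb.1 = subpath (dq c) i j,
    dz c = qcomp (qcomp (subpath (dq c) 0 i) pb.2) (subpath (dq c) j (size (dq c).2))
    & ~~ inI R (dz c)].
Proof.
case: c => q us vs z [_ Hev]; rewrite /dcoef.
case: (odd n.+1) Hev => Hev /=.
  rewrite /dcoef_odd => /sumr_neq0_witness [i [_ _ /sumr_neq0_witness [j [_ ij]]]].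
  move=> /pathelt_term_neq0 [/eqP Ep Ez nI].
  by exists i, j; split => //; [rewrite ij -ltnS ltn_ord | rewrite Ez].
have [L _] := Hev isT; rewrite /dcoef_even.
set t1 := (if _ then _ else _); set t2 := (if _ then _ else _).
have [/pathelt_term_neq0 [/eqP Ep Ez nI] _|/negPn/eqP ->] := boolP (t1 != 0).
  exists (size q.2 - lpi n vs)%N, (size q.2); split => //; last by rewrite Ez.
  by rewrite leq_subr leqnn.
rewrite sub0r oppr_eq0 => /pathelt_term_neq0 [/eqP Ep Ez nI].
exists 0%N, (lsig n us); split => //; last by rewrite Ez.
by rewrite leq0n (lsig_le _ L).
Qed.

Lemma subpath_factor (q : qpath Q) i j : (i <= j <= size q.2)%N ->
  q.2 = take i q.2 ++ (subpath q i j).2 ++ drop j q.2.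
Proof.
move=> /andP [ij jL]; rewrite /subpath /=.
by rewrite catA -{1}(take_takel _ ij) !cat_take_drop.
Qed.

Hypothesis tri : triangular Q.

(* [z] is [q] with one occurrence of [p] replaced by [b]; they differ
   because [q] lies in [I] and [z] does not. *)
Lemma dcoef_neq0_pair_divides n pb c : dcoord_ok R n c -> dcoef R K n pb c != 0 ->
  Gamma R n pb.1 -> parallel pb.1 pb.2 ->
  [/\ parallel (dq c) (dz c), (dq c).2 != (dz c).2
    & pair_divides pb.1.2 pb.2.2 (dq c).2 (dz c).2].
Proof.
move=> oc nz Gp PB; have [i [j [ijL Ep Ez nIz]]] := dcoef_neq0 oc nz.
case: c oc {nz} ijL Ep Ez nIz => q us vs z [[us' Lq] _] /= ijL Ep Ez nIz.
have Vq : valid_path q by case: Lq.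
have np := Gamma_neq_nil Gp.
have nb := parallel_nontrivial tri PB np.
set l := take i q.2; set r := drop j q.2.
have Eq : q.2 = l ++ pb.1.2 ++ r by rewrite Ep; apply: subpath_factor.
have {}Ez : z = (q.1, l ++ pb.2.2 ++ r).
  by rewrite Ez /subpath /= drop0 take_size vertex_at_size // catA.
split; first by rewrite Ez; apply: parallel_replace Eq PB np nb.
  by apply: contraNneq nIz => Eqz; rewrite /inI -Eqz; apply: left_amb_inI Lq.
by exists l, r; rewrite Ez.
Qed.

End NonzeroCoefficients.

Lemma count_lt_subpred (T : eqType) (a b : pred T) (s : seq T) f :
  subpred a b -> f \in s -> b f -> ~~ a f -> (count a s < count b s)%N.
Proof.
move=> ab; elim: s => //= y s IH; rewrite inE => /orP[/eqP <- bf naf | fs bf naf].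
  by rewrite bf (negbTE naf) add0n add1n ltnS sub_count.
rewrite -addnS leq_add ?IH //.
by case: (boolP (a y)) => // /ab ->.
Qed.

Section Refinement.
Variables (Q : quiver) (R : seq (seq (Q1 Q))) (K : fieldType).
Hypothesis tri : triangular Q.
Variables (n : nat) (x : cochain Q K).
Hypotheses (wf : wf_cochain R n x) (irr : irreducible R n x).

Lemma wf_cochain_parallel e : e \in x -> parallel e.2.1 e.2.2.
Proof.
move=> ex; have [_ [us L] /andP[Vb _] Es Et] := wf.2 e ex.
by split => //; case: L.
Qed.

Lemma linked_refine e f P H : e \in x -> f \in x -> linked R K n e.2 f.2 ->
  pair_divides P H e.2.1.2 e.2.2.2 -> P != [::] ->
  exists P' H', [/\ P' != [::], pair_divides P' H' P H
    & pair_divides P' H' f.2.1.2 f.2.2.2].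
Proof.
move=> ex fx [c [oc ke kf]] PHe nP.
have [_ Ge _ _ _] := wf.2 e ex; have [_ Gf _ _ _] := wf.2 f fx.
have [PQZ nQZ De] := dcoef_neq0_pair_divides tri oc ke Ge (wf_cochain_parallel ex).
have [_ _ Df] := dcoef_neq0_pair_divides tri oc kf Gf (wf_cochain_parallel fx).
have [M [H1 [nM DMe DMf]]] :=
  pair_divides_meet tri PQZ nQZ De Df (Gamma_neq_nil Ge) (Gamma_neq_nil Gf).
have neq_e : e.2.1.2 != e.2.2.2.
  by case: De => [cq [aq [Eq Ez]]]; apply: contraNneq nQZ => E; rewrite Eq Ez E.
have [P' [H' [nP' D1 D2]]] :=
  pair_divides_meet tri (wf_cochain_parallel ex) neq_e PHe DMe nP nM.
by exists P', H'; split => //; apply: pair_divides_trans D2 DMf.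
Qed.

Lemma common_pair_divisor e0 : e0 \in x ->
  exists P H, P != [::] /\ {in x, forall e, pair_divides P H e.2.1.2 e.2.2.2}.
Proof.
move=> e0x.
pose dv P H :=
  [pred e : K * (qpath Q * qpath Q) | `[< pair_divides P H e.2.1.2 e.2.2.2 >]].
pose good k := `[< exists P H, P != [::] /\ count (dv P H) x = k >].
have [_ G0 _ _ _] := wf.2 e0 e0x.
have good_e0 : good (count (dv e0.2.1.2 e0.2.2.2) x).
  by apply/asboolP; do 2!eexists; split; first exact: Gamma_neq_nil G0.
have good_le k : good k -> (k <= size x)%N.
  by move=> /asboolP[P [H [_ <-]]]; apply: count_size.
case: (ex_maxnP (ex_intro good _ good_e0) good_le) => k /asboolP[P [H [nP <-]]] kmax.
exists P, H; split => // e ex; apply/asboolP; move: e ex; apply/allP.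
apply: contraT => notall.
have hasPH : has (dv P H) x.
  rewrite has_count; apply: leq_trans (kmax _ good_e0).
  by rewrite -has_count; apply/hasP; exists e0 => //; apply/asboolP/pair_divides_refl.
have [e [f [ex fx /asboolP PHe /negP nPHf lef]]] :=
  irreducible_linked_out wf irr hasPH notall.
have [P' [H' [nP' D1 D2]]] := linked_refine ex fx lef PHe nP.
have : (count (dv P H) x < count (dv P' H') x)%N.
  apply: (count_lt_subpred (f := f)) => //.
  - by move=> g /asboolP Dg; apply/asboolP; apply: pair_divides_trans D1 Dg.
  - exact/asboolP.
  - exact/negP.
by rewrite ltnNge kmax //; apply/asboolP; exists P', H'.
Qed.

End Refinement.

Lemma pair_divides_factor (Q : quiver) (R : seq (seq (Q1 Q))) (p b : qpath Q) P H d :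
  parallel p b -> ~~ inI R b -> P != [::] -> H != [::] -> pair_divides P H p.2 b.2 ->
  exists a c : qpath Q,
    inB R a /\ inB R c /\
    ptgt a = psrc (word_path P d) /\ ptgt (word_path P d) = psrc c /\
    ptgt a = psrc (word_path H d) /\ ptgt (word_path H d) = psrc c /\
    p = qcomp (qcomp c (word_path P d)) a /\ b = qcomp (qcomp c (word_path H d)) a.
Proof.
move=> PB nIb nP nH [cw [aw [Ep Eb]]]; have [Vp Vb E1 _] := PB.
have [Va Vc Ta Tpt] := factor_paths d Vp Ep nP.
have [_ _ Tb Tbt] := factor_paths d Vb Eb nH.
have nI v w : infix w b.2 -> ~~ inI R (v, w).
  by move=> wb; apply: contra nIb; apply: inI_infix.
exists (p.1, aw), (vertex_at p (size cw), cw).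
split; first by rewrite /inB Va nI // Eb catA suffix_infix.
split; first by rewrite /inB Vc nI // Eb prefix_infix.
do 4?split => //; first by rewrite E1.
  by rewrite Tbt -(vertex_at_common_prefix PB Ep Eb).
by split; rewrite /qcomp -catA; [rewrite -Ep | rewrite E1 -Eb]; case: (p); case: (b).
Qed.

Theorem mainTheorem12 (K : fieldType) (Q : quiver) (R : seq (seq (Q1 Q)))
    (n : nat) (x : cochain Q K) :
  monomial_rels R -> triangular Q -> fin_dim R ->
  wf_cochain R n x -> (0 < size x)%N -> irreducible R n x ->
  exists pt bt : qpath Q,
    valid_path pt /\ valid_path bt /\ nontrivial pt /\ nontrivial bt /\
    forall e, e \in x ->
      exists a c : qpath Q,
        inB R a /\ inB R c /\
        ptgt a = psrc pt /\ ptgt pt = psrc c /\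
        ptgt a = psrc bt /\ ptgt bt = psrc c /\
        e.2.1 = qcomp (qcomp c pt) a /\ e.2.2 = qcomp (qcomp c bt) a.
Proof.
move=> _ tri _ wf x_gt0 irr.
have [e0 e0x] : exists e0, e0 \in x.
  by case: x x_gt0 {wf irr} => // e0 ? _; exists e0; rewrite mem_head.
have [P [H [nP PHx]]] := common_pair_divisor tri wf irr e0x.
have PB0 := wf_cochain_parallel wf e0x; have [Vp0 Vb0 _ _] := PB0.
have [c0 [a0 [Ep0 Eb0]]] := PHx e0 e0x.
have nH := parallel_factor_neq_nil tri PB0 Ep0 Eb0 nP.
have SP : sorted (@adj Q) P.
  by apply: (valid_path_sorted_infix Vp0); rewrite Ep0 infix_infix.
have SH : sorted (@adj Q) H.
  by apply: (valid_path_sorted_infix Vb0); rewrite Eb0 infix_infix.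
exists (word_path P e0.2.1.1), (word_path H e0.2.1.1).
split; first exact: valid_word_path.
split; first exact: valid_word_path.
do 2!split => //; move=> e ex; have [_ _ /andP[_ nIb] _ _] := wf.2 e ex.
exact: pair_divides_factor (wf_cochain_parallel wf ex) nIb nP nH (PHx e ex).
Qed.
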